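(* Let $E$ be a real Hilbert space with $\dim(E)\ge2$, $h\in E$ a unit vector, and $f:\mathbb{R}_{\ge0}\to\mathbb{R}_{\ge0}$ with $f(d)>0$ iff $d>0$. Let $x\preceq_f y\iff f(\|y_\perp-x_\perp\|)\le y_h-x_h$. Assume that $\preceq_f$ is topologically closed in $E\times E$, and that $f$ is square-superadditive, or merely superadditive in case $\dim(E)=2$. Then every pair of elements of $E$ has a join in $(E,\preceq_f)$.
   Context: For $x\in E$ write $x=x_h h+x_\perp$ with $x_h=(x,h)$ and $x_\perp$ orthogonal to $h$. The join of $P\subseteq E$ is an $x$ with $p\preceq_f x$ for all $p\in P$ and $x\preceq_f y$ for every $y$ with $p\preceq_f y$ for all $p\in P$. $f$ is superadditive if $f(x+y)\ge f(x)+f(y)$ for all $x,y\ge0$, and square-superadditive if $f(\sqrt{x^2+y^2})\ge f(x)+f(y)$ for all $x,y\ge0$. *)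

From HB Require Import structures.
From mathcomp Require Import all_boot all_order all_algebra.
From mathcomp Require Import all_classical all_reals all_analysis.
Set Implicit Arguments. Unset Strict Implicit. Unset Printing Implicit Defensive.
Import Order.TTheory GRing.Theory Num.Theory.
Import numFieldNormedType.Exports.
Local Open Scope classical_set_scope.
Local Open Scope ring_scope.

(* A real Hilbert space is modelled as a complete normed R-module E
   (R : realType) together with an inner product inducing its norm. *)
Definition is_inner_product (R : realType) (E : normedModType R)
  (ip : E -> E -> R) : Prop :=
  [/\ (forall x y, ip x y = ip y x),
      (forall (a : R) x y z, ip (a *: x + y) z = a * ip x z + ip y z) &
      (forall x, `|x| = Num.sqrt (ip x x))].

Definition lin_indep2 (R : realType) (E : normedModType R) (u v : E) : Prop :=
  forall a b : R, a *: u + b *: v = 0 -> a = 0 /\ b = 0.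

Definition dim_ge2 (R : realType) (E : normedModType R) : Prop :=
  exists u v : E, lin_indep2 u v.

Definition dim_eq2 (R : realType) (E : normedModType R) : Prop :=
  exists u v : E, lin_indep2 u v /\
    forall x : E, exists a b : R, x = a *: u + b *: v.

Definition comp_h (R : realType) (E : normedModType R) (ip : E -> E -> R)
  (h x : E) : R := ip x h.

Definition comp_perp (R : realType) (E : normedModType R) (ip : E -> E -> R)
  (h x : E) : E := x - comp_h ip h x *: h.

Definition f_le (R : realType) (E : normedModType R) (ip : E -> E -> R)
  (h : E) (f : R -> R) (x y : E) : Prop :=
  f `|comp_perp ip h y - comp_perp ip h x| <= comp_h ip h y - comp_h ip h x.

Definition is_join (T : Type) (le : T -> T -> Prop) (P : set T) (x : T) : Prop :=
  (forall p, P p -> le p x) /\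
  (forall y, (forall p, P p -> le p y) -> le x y).

(* f : R_{>=0} -> R_{>=0}; only values on [0, +oo) matter *)
Definition superadditive (R : realType) (f : R -> R) : Prop :=
  forall x y : R, 0 <= x -> 0 <= y -> f x + f y <= f (x + y).

Definition square_superadditive (R : realType) (f : R -> R) : Prop :=
  forall x y : R, 0 <= x -> 0 <= y ->
    f x + f y <= f (Num.sqrt (x ^+ 2 + y ^+ 2)).

From HB Require Import structures.
From mathcomp Require Import all_boot all_order all_algebra.
From mathcomp Require Import all_classical all_reals all_analysis.
From mathcomp Require Import ring lra.
Set Implicit Arguments.
Unset Strict Implicit.
Unset Printing Implicit Defensive.
Import Order.TTheory GRing.Theory Num.Theory.
Import numFieldNormedType.Exports.
Local Open Scope classical_set_scope.
Local Open Scope ring_scope.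

(* Write x = a1 h + u1 and y = a2 h + u2 with u1, u2 orthogonal to h.  If x
   and y are incomparable, then D = |u2 - u1| > 0 and e = (u2 - u1) / D is a
   unit vector orthogonal to h.  Along the
   segment from u1 to u2, the height a1 + f s of the cone above x increases and
   the height a2 + f (D - s) of the cone above y decreases.  Let s be their
   crossing point, w = u1 + s e, and c the larger of the two heights at s; the
   join is c h + w.  For an upper bound b h + v with v <> w, the angle at w of
   the triangle (u1, w, v) or (u2, w, v) is not acute, say of the first, so
   |v - u1|^2 >= s^2 + |v - w|^2 (and |v - u1| = s + |v - w| if dim E = 2).
   Square-superadditivity (resp. superadditivity) then gives
   f s + f |v - w| <= f |v - u1| <= b - a1, whence c + f |v - w| <= b.  As c is
   only bounded by a1 + f t for t slightly above s, the last step uses the left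
   lower semicontinuity of f, which follows from the closedness of <=_f. *)

Lemma is_join_pair_le (T : Type) (le : T -> T -> Prop) (x y : T) :
  (forall p, le p p) -> le x y -> is_join le [set x; y] y.
Proof. by move=> le_refl le_xy; split=> [p [->|->] //|z]; apply; right. Qed.

Section RealFunctions.
Variable R : realType.
Implicit Types (f g : R -> R) (P : set R).

Definition nneg_nondecreasing g := forall a b, 0 <= a -> a <= b -> g a <= g b.

Definition left_lower_semicontinuous g := forall d K, 0 < d ->
  (forall d', 0 <= d' -> d' < d -> g d' <= K) -> g d <= K.

Definition right_adherent P s :=
  forall delta, 0 < delta -> exists2 t, s <= t <= s + delta & P t.

Section Superadditive.
Variable f : R -> R.
Hypothesis f_ge0 : forall d, 0 <= d -> 0 <= f d.

Lemma superadditive_nondecreasing :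
  superadditive f -> nneg_nondecreasing f.
Proof.
move=> fD a b a0 ab; have := fD a (b - a) a0; rewrite [a + _]addrC subrK.
by have := @f_ge0 (b - a); rewrite subr_ge0; lra.
Qed.

Lemma superadditive_le a b c : superadditive f -> 0 <= a -> 0 <= b ->
  a + b <= c -> f a + f b <= f c.
Proof.
move=> fD a0 b0 abc; apply: le_trans (fD a b a0 b0) _.
apply: (superadditive_nondecreasing fD) abc; lra.
Qed.

Lemma square_superadditive_nondecreasing :
  square_superadditive f -> nneg_nondecreasing f.
Proof.
move=> fD a b a0 ab.
have b2a2 : 0 <= b ^+ 2 - a ^+ 2 by rewrite subr_ge0 ler_sqr ?nnegrE //; lra.
have := fD a _ a0 (sqrtr_ge0 (b ^+ 2 - a ^+ 2)).
rewrite sqr_sqrtr // [a ^+ 2 + _]addrC subrK sqrtr_sqr ger0_norm; last lra.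
by have := f_ge0 (sqrtr_ge0 (b ^+ 2 - a ^+ 2)); lra.
Qed.

Lemma square_superadditive_le a b c : square_superadditive f ->
  0 <= a -> 0 <= b -> 0 <= c -> a ^+ 2 + b ^+ 2 <= c ^+ 2 -> f a + f b <= f c.
Proof.
move=> fD a0 b0 c0 abc; apply: le_trans (fD a b a0 b0) _.
apply: (square_superadditive_nondecreasing fD); first exact: sqrtr_ge0.
by rewrite -(ger0_norm c0) -sqrtr_sqr ler_sqrt // exprn_ge0.
Qed.

End Superadditive.

Lemma add_le_of_right_adherent f (r rho s a b c : R) :
  left_lower_semicontinuous f -> 0 < r ->
  (forall r', 0 <= r' -> r' < r -> exists2 delta, 0 < delta &
     forall t, s <= t <= s + delta -> f t + f r' <= f rho) ->
  a + f rho <= b -> right_adherent [set t | c <= a + f t] s -> c + f r <= b.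
Proof.
move=> f_lsc r_gt0 slack rho_le adh.
suff : f r <= b - c by lra.
apply: (f_lsc _ _ r_gt0) => r' r'_ge0 r'_lt.
have [delta delta_gt0 near_s] := slack r' r'_ge0 r'_lt.
have [t st /= ct] := adh delta delta_gt0.
by have := near_s t st; lra.
Qed.

Lemma nneg_nondecreasingD a f :
  nneg_nondecreasing f -> nneg_nondecreasing (fun t => a + f t).
Proof. by move=> f_mono t t' t0 tt'; rewrite lerD2l f_mono. Qed.

Lemma left_lower_semicontinuousD a f :
  left_lower_semicontinuous f -> left_lower_semicontinuous (fun t => a + f t).
Proof.
move=> f_lsc d K d_gt0 below; rewrite -lerBrDl.
by apply: (f_lsc _ _ d_gt0) => d' d'0 d'd; rewrite lerBrDl below.
Qed.

Section Crossing.
Variables (g1 g2 : R -> R) (D : R).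
Hypotheses (D_gt0 : 0 < D) (g1_0 : g1 0 <= g2 D) (g2_0 : g2 0 <= g1 D).
Hypotheses (g1_mono : nneg_nondecreasing g1) (g2_mono : nneg_nondecreasing g2).
Hypotheses (g1_lsc : left_lower_semicontinuous g1)
  (g2_lsc : left_lower_semicontinuous g2).

Let S := [set s | 0 <= s <= D /\ g1 s <= g2 (D - s)].

Definition crossing_point := sup S.

Let s := crossing_point.
Let c := Num.max (g1 s) (g2 (D - s)).

Let S_has_sup : has_sup S.
Proof.
split; first by exists 0; split; [rewrite lexx ltW | rewrite subr0].
by exists D => t [/andP[]].
Qed.

Lemma crossing_point_ge0 : 0 <= s.
Proof.
apply: sup_upper_bound S_has_sup _ _.
by split; [rewrite lexx ltW | rewrite subr0].
Qed.

Lemma crossing_point_le : s <= D.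
Proof. by apply: ge_sup; [case: S_has_sup | move=> t [/andP[]]]. Qed.

Let lt_above t : s < t <= D -> g2 (D - t) < g1 t.
Proof.
move=> /andP[st tD]; rewrite ltNge; apply/negP => t_in.
have : S t.
  by split=> //; apply/andP; split=> //; have := crossing_point_ge0; lra.
by move/(sup_upper_bound S_has_sup); rewrite -/crossing_point -/s; lra.
Qed.

Lemma crossing_max_le_above t : s < t <= D -> c <= g1 t.
Proof.
move=> /andP[st tD]; have s0 := crossing_point_ge0.
rewrite ge_max (g1_mono s0 (ltW st)) /=.
apply: (@g2_lsc (D - s)) => [|d d0 d_lt]; first lra.
have [dt|td] := leP d (D - t).
  by have := g2_mono d0 dt; have := @lt_above t; rewrite st tD; lra.
have := @lt_above (D - d); rewrite (_ : D - (D - d) = d); last lra.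
by have := @g1_mono (D - d) t; lra.
Qed.

Lemma crossing_max_le_below t : 0 <= t < s -> c <= g2 (D - t).
Proof.
move=> /andP[t0 ts]; have sD := crossing_point_le.
have le_ts : g2 (D - s) <= g2 (D - t) by apply: g2_mono; lra.
rewrite ge_max le_ts andbT.
apply: (@g1_lsc s) => [|d d0 d_lt]; first lra.
have [t' [/andP[t'0 t'D] t'_in] lt_t'] : exists2 t', S t' & Num.max d t < t'.
  have [|t' t'_in lt_t'] := sup_adherent (_ : 0 < s - Num.max d t) S_has_sup.
    by rewrite subr_gt0 gt_max d_lt ts.
  by exists t' => //; move: lt_t'; rewrite -/crossing_point -/s; lra.
move: lt_t'; rewrite gt_max => /andP[dt' tt'].
have := g1_mono d0 (ltW dt'); have := @g2_mono (D - t') (D - t).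
lra.
Qed.

Lemma crossing_right_adherent_g1 : right_adherent [set t | c <= g1 t] s.
Proof.
move=> delta delta_gt0; have s0 := crossing_point_ge0.
have [sD|sD] := eqVneq s D.
  exists s; first by rewrite lexx /=; lra.
  by rewrite /= /c ge_max sD subrr lexx g2_0.
have sD' : s < D by rewrite lt_neqAle sD crossing_point_le.
exists (Num.min (s + delta) D); first by rewrite ge_min lexx le_min; lra.
by apply: crossing_max_le_above; rewrite lt_min ge_min lexx orbT; lra.
Qed.

Lemma crossing_right_adherent_g2 : right_adherent [set t | c <= g2 t] (D - s).
Proof.
move=> delta delta_gt0; have sD := crossing_point_le.
have [s0|s0] := eqVneq s 0.
  exists D; first by rewrite s0; lra.
  by rewrite /= /c ge_max s0 subr0 lexx g1_0.
have s_gt0 : 0 < s by rewrite lt_neqAle eq_sym s0 crossing_point_ge0.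
have m_ge : s - delta <= Num.max (s - delta) 0 by rewrite le_max lexx.
have m_ge0 : 0 <= Num.max (s - delta) 0 by rewrite le_max lexx orbT.
have m_lt : Num.max (s - delta) 0 < s by rewrite gt_max s_gt0 andbT; lra.
exists (D - Num.max (s - delta) 0); first lra.
by apply: crossing_max_le_below; rewrite m_ge0 m_lt.
Qed.

End Crossing.
End RealFunctions.

Section InnerProduct.
Variables (R : realType) (E : normedModType R) (ip : E -> E -> R).
Hypothesis ipP : is_inner_product ip.

Lemma ipC x y : ip x y = ip y x.
Proof. by case: ipP. Qed.

Lemma ipDl x y z : ip (x + y) z = ip x z + ip y z.
Proof. by case: ipP => _ lin _; have := lin 1 x y z; rewrite scale1r mul1r. Qed.

Lemma ip0l z : ip 0 z = 0.
Proof. by have := ipDl 0 0 z; rewrite addr0; lra. Qed.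

Lemma ipZl a x z : ip (a *: x) z = a * ip x z.
Proof.
by case: ipP => _ lin _; have := lin a x 0 z; rewrite addr0 ip0l addr0.
Qed.

Lemma ipBl x y z : ip (x - y) z = ip x z - ip y z.
Proof. by rewrite ipDl -scaleN1r ipZl mulN1r. Qed.

Lemma ipZr a x z : ip z (a *: x) = a * ip z x.
Proof. by rewrite ipC ipZl ipC. Qed.

Lemma ipDr x y z : ip z (x + y) = ip z x + ip z y.
Proof. by rewrite ipC ipDl !(ipC z). Qed.

Lemma sqr_norm_ip x : `|x| ^+ 2 = ip x x.
Proof.
case: ipP => _ _ normE.
have [ip_lt0|ip_ge0] := ltP (ip x x) 0; last by rewrite normE sqr_sqrtr.
have /normr0_eq0 x0 : `|x| = 0 by rewrite normE ltr0_sqrtr.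
by move: ip_lt0; rewrite x0 ip0l ltxx.
Qed.

Lemma sqr_normD_ge x y : 0 <= ip x y -> `|x| ^+ 2 + `|y| ^+ 2 <= `|x + y| ^+ 2.
Proof. by rewrite !sqr_norm_ip ipDl !ipDr (ipC y x); lra. Qed.

Variables (h : E) (f : R -> R).
Hypothesis h_norm1 : `|h| = 1.

Lemma iphh : ip h h = 1.
Proof. by rewrite -sqr_norm_ip h_norm1 expr1n. Qed.

Lemma ip_comp_perp x : ip (comp_perp ip h x) h = 0.
Proof. by rewrite /comp_perp ipBl ipZl iphh mulr1 subrr. Qed.

Lemma comp_h_orth c w : ip w h = 0 -> comp_h ip h (c *: h + w) = c.
Proof. by move=> wh; rewrite /comp_h ipDl ipZl iphh wh mulr1 addr0. Qed.

Lemma comp_perp_orth c w : ip w h = 0 -> comp_perp ip h (c *: h + w) = w.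
Proof. by move=> wh; rewrite /comp_perp comp_h_orth // addrC addKr. Qed.

Lemma f_le_orthE c c' w w' : ip w h = 0 -> ip w' h = 0 ->
  f_le ip h f (c *: h + w) (c' *: h + w') = (f `|w' - w| <= c' - c).
Proof. by move=> wh w'h; rewrite /f_le !comp_h_orth // !comp_perp_orth. Qed.

Lemma dim_eq2_orth_parallel e n : dim_eq2 E ->
  e != 0 -> ip e h = 0 -> ip n h = 0 -> exists l, n = l *: e.
Proof.
move=> [u [v [_ span]]] e0 eh nh.
have [a0 [b0 hE]] := span h; have [a1 [b1 eE]] := span e.
have [a2 [b2 nE]] := span n.
(* Pairing [comb] with h shows that the coordinates of e and n have a zero
   determinant. *)
have comb : (a1 * b2 - a2 * b1) *: h
    = (a0 * b2 - a2 * b0) *: e + (a1 * b0 - a0 * b1) *: n.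
  rewrite {1}hE eE nE !scalerDr !scalerA addrACA -!scalerDl.
  by congr (_ *: _ + _ *: _); ring.
have det0 : a1 * b2 - a2 * b1 = 0.
  have := congr1 (ip^~ h) comb.
  by rewrite /= ipDl !ipZl eh nh iphh !mulr0 addr0 mulr1.
have q0 : a1 ^+ 2 + b1 ^+ 2 != 0.
  apply: contra e0 => /eqP q0; rewrite eE.
  have [-> ->] : a1 = 0 /\ b1 = 0 by split; nra.
  by rewrite !scale0r addr0.
exists ((a1 * a2 + b1 * b2) / (a1 ^+ 2 + b1 ^+ 2)).
rewrite nE eE scalerDr !scalerA; congr (_ *: _ + _ *: _);
  apply: (mulIf q0); rewrite mulrAC divfK //.
- have -> : a2 * (a1 ^+ 2 + b1 ^+ 2)
           = (a1 * a2 + b1 * b2) * a1 - b1 * (a1 * b2 - a2 * b1) by ring.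
  by rewrite det0 mulr0 subr0.
- have -> : b2 * (a1 ^+ 2 + b1 ^+ 2)
           = (a1 * a2 + b1 * b2) * b1 + a1 * (a1 * b2 - a2 * b1) by ring.
  by rewrite det0 mulr0 addr0.
Qed.

Lemma f_le_closed_lsc e : `|e| = 1 -> ip e h = 0 ->
  closed [set p : E * E | f_le ip h f p.1 p.2] -> left_lower_semicontinuous f.
Proof.
move=> e_norm1 eh f_le_closed d K d_gt0 below.
have f_le_0E t : 0 <= t -> f_le ip h f 0 (K *: h + t *: e) = (f t <= K).
  have -> : (0 : E) = 0 *: h + 0 by rewrite scale0r addr0.
  move=> t0; rewrite f_le_orthE ?ip0l ?ipZl ?eh ?mulr0 // !subr0.
  by rewrite normrZ e_norm1 mulr1 ger0_norm.
rewrite -f_le_0E ?ltW //.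
have near_d : \forall t \near d^'-,
    [set p : E * E | f_le ip h f p.1 p.2] (0, K *: h + t *: e).
  near=> t; rewrite /= f_le_0E; last by near: t; apply: nbhs_left_ge.
  apply: below; last by near: t; apply: nbhs_left_lt.
  by near: t; apply: nbhs_left_ge.
have to_d :
    (fun t => ((0 : E), K *: h + t *: e)) @ d^'- --> (0, K *: h + d *: e).
  apply: cvg_at_left_filter; apply: cvg_pair; first exact: cvg_cst.
  apply: cvgD; first exact: cvg_cst.
  by apply: cvgZ; [exact: cvg_id | exact: cvg_cst].
exact: (closed_cvg _ f_le_closed near_d _ to_d).
Unshelve. all: by end_near.
Qed.

Hypothesis f_ge0 : forall d, 0 <= d -> 0 <= f d.

Lemma f_add_le_broken_path_sq u w v e s : square_superadditive f ->
  `|e| = 1 -> w = u + s *: e -> 0 <= s -> 0 <= ip (v - w) e ->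
  forall r', 0 <= r' -> r' < `|v - w| -> exists2 delta, 0 < delta &
    forall t, s <= t <= s + delta -> f t + f r' <= f `|v - u|.
Proof.
move=> f_sq e_norm1 -> s_ge0 obtuse r' r'_ge0.
rewrite [v - u](_ : _ = v - (u + s *: e) + s *: e); last first.
  by rewrite opprD addrA subrK.
set r := `|_ - _|; set rho := `|_ + _| => r'_lt.
have rho2 : s ^+ 2 + r ^+ 2 <= rho ^+ 2.
  have := @sqr_normD_ge (v - (u + s *: e)) (s *: e).
  rewrite normrZ e_norm1 mulr1 ger0_norm // ipZr -/r -/rho.
  by move/(_ (mulr_ge0 s_ge0 obtuse)); lra.
have X_gt0 : 0 < s ^+ 2 + r ^+ 2 - r' ^+ 2 by nra.
exists (Num.sqrt (s ^+ 2 + r ^+ 2 - r' ^+ 2) - s).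
  by rewrite subr_gt0 -[s in s < _]ger0_norm // -sqrtr_sqr ltr_sqrt //; nra.
move=> t /andP[st tX]; have t_ge0 : 0 <= t by lra.
apply: square_superadditive_le => //; first exact: normr_ge0.
have : t ^+ 2 <= s ^+ 2 + r ^+ 2 - r' ^+ 2.
  by rewrite -(sqr_sqrtr (ltW X_gt0)) ler_sqr ?nnegrE ?sqrtr_ge0 //; lra.
lra.
Qed.

Lemma f_add_le_broken_path_dim2 u w v e s : dim_eq2 E -> superadditive f ->
  `|e| = 1 -> ip e h = 0 -> ip (v - w) h = 0 ->
  w = u + s *: e -> 0 <= s -> 0 <= ip (v - w) e ->
  forall r', 0 <= r' -> r' < `|v - w| -> exists2 delta, 0 < delta &
    forall t, s <= t <= s + delta -> f t + f r' <= f `|v - u|.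
Proof.
move=> dim2 f_add e_norm1 eh vwh w_def s_ge0 obtuse r' r'_ge0 r'_lt.
have e0 : e != 0 by rewrite -normr_eq0 e_norm1 oner_neq0.
have [l vwE] := dim_eq2_orth_parallel dim2 e0 eh vwh.
have l_ge0 : 0 <= l.
  by move: obtuse; rewrite vwE ipZl -sqr_norm_ip e_norm1 expr1n mulr1.
have r_l : `|v - w| = l by rewrite vwE normrZ e_norm1 mulr1 ger0_norm.
have rho_sl : `|v - u| = s + l.
  have -> : v - u = (l + s) *: e.
    by rewrite scalerDl -vwE w_def opprD addrA subrK.
  by rewrite normrZ e_norm1 mulr1 ger0_norm; lra.
exists (`|v - w| - r'); first lra.
move=> t /andP[st tr]; apply: superadditive_le => //; lra.
Qed.

Hypothesis f_pos : forall d, 0 <= d -> (0 < f d <-> 0 < d).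

Lemma f_eq0 : f 0 = 0.
Proof.
have := f_ge0 (lexx 0); rewrite le_eqVlt => /orP[/eqP <- //|].
by move/(f_pos (lexx 0)); rewrite ltxx.
Qed.

Hypothesis f_le_closed : closed [set p : E * E | f_le ip h f p.1 p.2].
Hypothesis f_sup : square_superadditive f \/ (dim_eq2 E /\ superadditive f).

Lemma f_nondecreasing : nneg_nondecreasing f.
Proof.
case: f_sup => [f_sq | [_ f_add]].
  exact: square_superadditive_nondecreasing.
exact: superadditive_nondecreasing.
Qed.

Lemma join_side_le u w v e s a b c :
  `|e| = 1 -> ip e h = 0 -> ip (v - w) h = 0 ->
  w = u + s *: e -> 0 <= s -> 0 <= ip (v - w) e -> v != w ->
  a + f `|v - u| <= b -> right_adherent [set t | c <= a + f t] s ->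
  c + f `|v - w| <= b.
Proof.
move=> e_norm1 eh vwh w_def s_ge0 obtuse vw le_b adh.
have f_lsc := f_le_closed_lsc e_norm1 eh f_le_closed.
apply: (add_le_of_right_adherent f_lsc) le_b adh.
  by rewrite normr_gt0 subr_eq0.
case: f_sup => [f_sq | [dim2 f_add]].
  exact: f_add_le_broken_path_sq f_sq e_norm1 w_def s_ge0 obtuse.
exact: f_add_le_broken_path_dim2 dim2 f_add e_norm1 eh vwh w_def s_ge0 obtuse.
Qed.

Section PairJoin.
Variables x y : E.
Hypotheses (x_nle_y : ~ f_le ip h f x y) (y_nle_x : ~ f_le ip h f y x).

Let a1 := comp_h ip h x.
Let a2 := comp_h ip h y.
Let u1 := comp_perp ip h x.
Let u2 := comp_perp ip h y.
Let D := `|u2 - u1|.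
Let e := D^-1 *: (u2 - u1).
Let g1 t := a1 + f t.
Let g2 t := a2 + f t.
Let s := crossing_point g1 g2 D.
Let c := Num.max (g1 s) (g2 (D - s)).
Let w := u1 + s *: e.

Definition pair_join := c *: h + w.

Let a1_lt : a1 < a2 + f D.
Proof.
have /negP : ~ (f `|u1 - u2| <= a1 - a2) := y_nle_x.
by rewrite -ltNge distrC -/D; lra.
Qed.

Let a2_lt : a2 < a1 + f D.
Proof.
have /negP : ~ (f D <= a2 - a1) := x_nle_y.
by rewrite -ltNge; lra.
Qed.

Let D_gt0 : 0 < D.
Proof.
rewrite lt_neqAle normr_ge0 andbT; apply/eqP => D0.
by have := a1_lt; have := a2_lt; rewrite -D0 f_eq0; lra.
Qed.

Let e_norm1 : `|e| = 1.
Proof. by rewrite normrZ ger0_norm ?invr_ge0 ?normr_ge0 // mulVf ?gt_eqF. Qed.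

Let e_orth : ip e h = 0.
Proof. by rewrite ipZl ipBl !ip_comp_perp subrr mulr0. Qed.

Let w_orth : ip w h = 0.
Proof. by rewrite ipDl ipZl ip_comp_perp e_orth mulr0 addr0. Qed.

Let w_from_u2 : w = u2 + (D - s) *: - e.
Proof.
have De : D *: e = u2 - u1 by rewrite scalerA mulfV ?gt_eqF // scale1r.
by rewrite scalerN scalerBl De opprB addrCA subKr [RHS]addrC.
Qed.

Let g1_0 : g1 0 <= g2 D.
Proof. by rewrite /g1 f_eq0 addr0 ltW. Qed.

Let g2_0 : g2 0 <= g1 D.
Proof. by rewrite /g2 f_eq0 addr0 ltW. Qed.

Let g1_mono := nneg_nondecreasingD a1 f_nondecreasing.
Let g2_mono := nneg_nondecreasingD a2 f_nondecreasing.
Let f_lsc := f_le_closed_lsc e_norm1 e_orth f_le_closed.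
Let g1_lsc := @left_lower_semicontinuousD _ a1 f f_lsc.
Let g2_lsc := @left_lower_semicontinuousD _ a2 f f_lsc.

Let s_ge0 : 0 <= s := crossing_point_ge0 D_gt0 g1_0.
Let s_le : s <= D := crossing_point_le D_gt0 g1_0.

Let w_u1 : `|w - u1| = s.
Proof. by rewrite /w addrC addKr normrZ e_norm1 mulr1 ger0_norm. Qed.

Let w_u2 : `|w - u2| = D - s.
Proof.
rewrite w_from_u2 addrC addKr normrZ normrN e_norm1 mulr1.
by rewrite ger0_norm ?subr_ge0.
Qed.

Lemma pair_join_ub : f_le ip h f x pair_join /\ f_le ip h f y pair_join.
Proof.
rewrite /f_le /pair_join !comp_h_orth // !comp_perp_orth // -/a1 -/a2 -/u1 -/u2.
have c_ge : g1 s <= c /\ g2 (D - s) <= c by rewrite /c !le_max !lexx orbT.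
by rewrite w_u1 w_u2; rewrite /g1 /g2 in c_ge; split; lra.
Qed.

Lemma pair_join_least z :
  f_le ip h f x z -> f_le ip h f y z -> f_le ip h f pair_join z.
Proof.
rewrite /f_le /pair_join comp_h_orth // comp_perp_orth // -/a1 -/a2 -/u1 -/u2.
set v := comp_perp ip h z; set b := comp_h ip h z.
rewrite !lerBrDl => le_x le_y.
have [vw|vw] := eqVneq v w.
  move: le_x le_y; rewrite vw w_u1 w_u2 subrr normr0 f_eq0 addr0 ge_max.
  by move=> le_x le_y; apply/andP.
have vwh : ip (v - w) h = 0 by rewrite ipBl ip_comp_perp w_orth subrr.
have [obtuse|acute] := leP 0 (ip (v - w) e).
  apply: (join_side_le e_norm1 e_orth vwh (erefl : w = u1 + s *: e) s_ge0
                       obtuse vw le_x).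
  exact: crossing_right_adherent_g1 D_gt0 g1_0 g2_0 g1_mono g2_mono g2_lsc.
have eN_norm1 : `|- e| = 1 by rewrite normrN.
have eN : - e = -1 *: e by rewrite scaleN1r.
have eN_orth : ip (- e) h = 0 by rewrite eN ipZl e_orth mulr0.
have obtuse : 0 <= ip (v - w) (- e) by rewrite eN ipZr mulN1r oppr_ge0 ltW.
apply: (join_side_le eN_norm1 eN_orth vwh w_from_u2 _ obtuse vw le_y).
  by rewrite subr_ge0.
exact: crossing_right_adherent_g2 D_gt0 g1_0 g1_mono g2_mono g1_lsc.
Qed.

Lemma pair_join_is_join : is_join (f_le ip h f) [set x; y] pair_join.
Proof.
have [le_x le_y] := pair_join_ub.
split=> [p [->|->] //|z ub_z].
by apply: pair_join_least; apply: ub_z; [left|right].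
Qed.

End PairJoin.
End InnerProduct.

Theorem mainTheorem17 (R : realType) (E : completeNormedModType R)
  (ip : E -> E -> R) (Hip : is_inner_product ip)
  (Hdim : dim_ge2 E)
  (h : E) (Hh : `|h| = 1)
  (f : R -> R)
  (Hf_nonneg : forall d : R, 0 <= d -> 0 <= f d)
  (Hf_pos : forall d : R, 0 <= d -> (0 < f d <-> 0 < d))
  (Hclosed : closed [set p : E * E | f_le ip h f p.1 p.2])
  (Hsup : square_superadditive f \/ (dim_eq2 E /\ superadditive f)) :
  forall x y : E, exists j : E, is_join (f_le ip h f) [set x; y] j.
Proof.
move=> x y.
have f_le_refl p : f_le ip h f p p.
  by rewrite /f_le !subrr normr0 (f_eq0 Hf_nonneg Hf_pos).
have [le_xy|nle_xy] := pselect (f_le ip h f x y).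
  by exists y; apply: is_join_pair_le.
have [le_yx|nle_yx] := pselect (f_le ip h f y x).
  by exists x; rewrite setUC; apply: is_join_pair_le.
by exists (pair_join ip h f x y); apply: pair_join_is_join.
Qed.
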